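(* Let $(X,d)$ be a locally compact noncompact Polish space with compatible metric $d$, let $A$ be a nonzero C*-algebra, and let $Y_n\subseteq X$ ($n\in\mathbb N$) be infinite, compact, pairwise disjoint sets such that no compact subset of $X$ meets infinitely many $Y_n$. Then: (1) for every $f\in\mathbb N^{\mathbb N}$, $D_f$ is a C*-subalgebra of $C_b(X,A)$, and if $A$ is unital then $D_f$ is unital; (2) if $f_1\le^* f_2$ then $C_{f_1}\subseteq C_{f_2}$; (3) $C_b(X,A)=\bigcup_{f\in\mathbb N^{\mathbb N}}D_f$; (4) for every $f\in\mathbb N^{\mathbb N}$ there is $g\in C_b(X,A)$ with $\pi(g)\notin C_f$.
   Context: $\mathbb N^{\mathbb N}$ denotes the set of sequences $f\colon\mathbb N\to\mathbb N$ with $f(n)>0$ for all $n$; $f_1\le^* f_2$ means $f_1(n)\le f_2(n)$ for all but finitely many $n$. $C_b(X,A)$ is the C*-algebra of bounded continuous functions $X\to A$, $C_0(X,A)$ the ideal of those vanishing at infinity, $Q(X,A)=C_b(X,A)/C_0(X,A)$ and $\pi\colon C_b(X,A)\to Q(X,A)$ the quotient map. For $f\in\mathbb N^{\mathbb N}$, $D_f=D_f(X,A,Y_n)=\{g\in C_b(X,A)\mid \forall\epsilon>0\ \exists n_0\ \forall n\ge n_0\ \forall x,y\in Y_n\ (d(x,y)<1/f(n)\Rightarrow\|g(x)-g(y)\|<\epsilon)\}$, and $C_f=\pi(D_f)$. *)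

From Stdlib Require Import Reals List.
Open Scope R_scope.

Record Cx := mkCx { cre : R; cim : R }.
Definition Cadd (a b : Cx) : Cx := mkCx (cre a + cre b) (cim a + cim b).
Definition Cmul (a b : Cx) : Cx :=
  mkCx (cre a * cre b - cim a * cim b) (cre a * cim b + cim a * cre b).
Definition Cconj (a : Cx) : Cx := mkCx (cre a) (- cim a).
Definition Cabs (a : Cx) : R := sqrt (cre a ^ 2 + cim a ^ 2).
Definition C1 : Cx := mkCx 1 0.

Record CStarAlg := {
  car :> Type;
  c0 : car;
  cadd : car -> car -> car;
  copp : car -> car;
  csc : Cx -> car -> car;
  cmul : car -> car -> car;
  cstar : car -> car;
  cnorm : car -> R;
  ax_addA : forall x y z, cadd x (cadd y z) = cadd (cadd x y) z;
  ax_addC : forall x y, cadd x y = cadd y x;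
  ax_add0 : forall x, cadd x c0 = x;
  ax_addN : forall x, cadd x (copp x) = c0;
  ax_sc1 : forall x, csc C1 x = x;
  ax_scA : forall a b x, csc a (csc b x) = csc (Cmul a b) x;
  ax_scDr : forall a x y, csc a (cadd x y) = cadd (csc a x) (csc a y);
  ax_scDl : forall a b x, csc (Cadd a b) x = cadd (csc a x) (csc b x);
  ax_mulA : forall x y z, cmul x (cmul y z) = cmul (cmul x y) z;
  ax_mulDl : forall x y z, cmul (cadd x y) z = cadd (cmul x z) (cmul y z);
  ax_mulDr : forall x y z, cmul x (cadd y z) = cadd (cmul x y) (cmul x z);
  ax_mulscl : forall a x y, cmul (csc a x) y = csc a (cmul x y);
  ax_mulscr : forall a x y, cmul x (csc a y) = csc a (cmul x y);
  ax_starK : forall x, cstar (cstar x) = x;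
  ax_starD : forall x y, cstar (cadd x y) = cadd (cstar x) (cstar y);
  ax_starsc : forall a x, cstar (csc a x) = csc (Cconj a) (cstar x);
  ax_starM : forall x y, cstar (cmul x y) = cmul (cstar y) (cstar x);
  ax_norm_ge0 : forall x, 0 <= cnorm x;
  ax_norm_eq0 : forall x, cnorm x = 0 -> x = c0;
  ax_normD : forall x y, cnorm (cadd x y) <= cnorm x + cnorm y;
  ax_normsc : forall a x, cnorm (csc a x) = Cabs a * cnorm x;
  ax_normM : forall x y, cnorm (cmul x y) <= cnorm x * cnorm y;
  ax_complete : forall u : nat -> car,
      (forall eps, eps > 0 -> exists N, forall m n, (m >= N)%nat -> (n >= N)%nat ->
          cnorm (cadd (u m) (copp (u n))) < eps) ->
      exists l, forall eps, eps > 0 -> exists N, forall n, (n >= N)%nat ->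
          cnorm (cadd (u n) (copp l)) < eps;
  ax_cstar : forall x, cnorm (cmul (cstar x) x) = cnorm x * cnorm x
}.

Arguments c0 {_}. Arguments cadd {_}. Arguments copp {_}. Arguments csc {_}.
Arguments cmul {_}. Arguments cstar {_}. Arguments cnorm {_}.

Definition csub {A : CStarAlg} (x y : A) : A := cadd x (copp y).

Definition nonzero_alg (A : CStarAlg) : Prop := exists a : A, a <> c0.
Definition unital_alg (A : CStarAlg) : Prop :=
  exists u : A, forall a : A, cmul u a = a /\ cmul a u = a.

Definition is_metric {X : Type} (d : X -> X -> R) : Prop :=
  (forall x y, 0 <= d x y) /\
  (forall x y, d x y = 0 <-> x = y) /\
  (forall x y, d x y = d y x) /\
  (forall x y z, d x z <= d x y + d y z).

Definition open_set {X : Type} (d : X -> X -> R) (U : X -> Prop) : Prop :=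
  forall x, U x -> exists eps, eps > 0 /\ forall y, d x y < eps -> U y.

Definition compact_set {X : Type} (d : X -> X -> R) (K : X -> Prop) : Prop :=
  forall (I : Type) (U : I -> X -> Prop),
    (forall i, open_set d (U i)) ->
    (forall x, K x -> exists i, U i x) ->
    exists l : list I, forall x, K x -> exists i, In i l /\ U i x.

Definition locally_compact {X : Type} (d : X -> X -> R) : Prop :=
  forall x, exists K eps, compact_set d K /\ eps > 0 /\
    forall y, d x y < eps -> K y.

Definition separable {X : Type} (d : X -> X -> R) : Prop :=
  exists s : nat -> X, forall x eps, eps > 0 -> exists n, d x (s n) < eps.

Definition complete_metric {X : Type} (d : X -> X -> R) : Prop :=
  forall u : nat -> X,
    (forall eps, eps > 0 -> exists N, forall m n, (m >= N)%nat -> (n >= N)%nat ->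
        d (u m) (u n) < eps) ->
    exists l, forall eps, eps > 0 -> exists N, forall n, (n >= N)%nat -> d (u n) l < eps.

Definition polish {X : Type} (d : X -> X -> R) : Prop :=
  separable d /\
  exists d' : X -> X -> R, is_metric d' /\ complete_metric d' /\
    forall U, open_set d U <-> open_set d' U.

Definition infinite_set {X : Type} (Y : X -> Prop) : Prop :=
  ~ exists l : list X, forall x, Y x -> In x l.

Definition continuous_fn {X : Type} (d : X -> X -> R) {A : CStarAlg} (g : X -> A) : Prop :=
  forall x eps, eps > 0 -> exists delta, delta > 0 /\
    forall y, d x y < delta -> cnorm (csub (g x) (g y)) < eps.

Definition Cb {X : Type} (d : X -> X -> R) {A : CStarAlg} (g : X -> A) : Prop :=
  continuous_fn d g /\ exists M, forall x, cnorm (g x) <= M.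

Definition C0 {X : Type} (d : X -> X -> R) {A : CStarAlg} (g : X -> A) : Prop :=
  Cb d g /\ forall eps, eps > 0 -> exists K, compact_set d K /\
    forall x, ~ K x -> cnorm (g x) < eps.

Definition fadd {X} {A : CStarAlg} (g h : X -> A) : X -> A := fun x => cadd (g x) (h x).
Definition fsub {X} {A : CStarAlg} (g h : X -> A) : X -> A := fun x => csub (g x) (h x).
Definition fsc {X} {A : CStarAlg} (a : Cx) (g : X -> A) : X -> A := fun x => csc a (g x).
Definition fmul {X} {A : CStarAlg} (g h : X -> A) : X -> A := fun x => cmul (g x) (h x).
Definition fstar {X} {A : CStarAlg} (g : X -> A) : X -> A := fun x => cstar (g x).
Definition fzero {X} {A : CStarAlg} : X -> A := fun _ => c0.

Definition cstar_subalgebra {X : Type} (d : X -> X -> R) {A : CStarAlg}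
    (S : (X -> A) -> Prop) : Prop :=
  (forall g, S g -> Cb d g) /\
  S fzero /\
  (forall g h, S g -> S h -> S (fadd g h)) /\
  (forall a g, S g -> S (fsc a g)) /\
  (forall g h, S g -> S h -> S (fmul g h)) /\
  (forall g, S g -> S (fstar g)) /\
  (forall g, Cb d g ->
     (forall eps, eps > 0 -> exists h, S h /\ forall x, cnorm (csub (g x) (h x)) <= eps) ->
     S g).

Definition unital_subalgebra {X : Type} {A : CStarAlg} (S : (X -> A) -> Prop) : Prop :=
  exists e, S e /\ forall g, S g -> forall x, cmul (e x) (g x) = g x /\ cmul (g x) (e x) = g x.

(* f in N^N: positive sequences *)
Definition posseq (f : nat -> nat) : Prop := forall n, (0 < f n)%nat.

Definition le_star (f1 f2 : nat -> nat) : Prop :=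
  exists N, forall n, (n >= N)%nat -> (f1 n <= f2 n)%nat.

Definition Df {X : Type} (d : X -> X -> R) (A : CStarAlg) (Y : nat -> X -> Prop)
    (f : nat -> nat) (g : X -> A) : Prop :=
  Cb d g /\
  forall eps, eps > 0 -> exists n0, forall n, (n >= n0)%nat ->
    forall x y, Y n x -> Y n y -> d x y < / INR (f n) ->
      cnorm (csub (g x) (g y)) < eps.

(* pi(g) \in C_f = pi(D_f), i.e. g \in D_f + C_0(X,A) *)
Definition in_Cf {X : Type} (d : X -> X -> R) (A : CStarAlg) (Y : nat -> X -> Prop)
    (f : nat -> nat) (g : X -> A) : Prop :=
  exists h, Df d A Y f h /\ C0 d (fsub g h).

(* (1) Continuity at a point and the D_f condition are both instances of one
   notion: the oscillation of g becomes small on the pairs of points of a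
   filter of pairs. Sums, scalings, adjoints, products of bounded functions and
   uniform limits preserve it, and constants satisfy it.
   (2) A larger f only shrinks the pairs d(x,y) < 1/f(n) to be controlled.
   (3) A continuous g is uniformly continuous on each compact Y_n, which yields
   f(n) with oscillation < 1/(n+1) at scale 1/f(n).
   (4) Pick in each Y_n two distinct points x_n, y_n with d(x_n,y_n) < 1/f(n);
   since the sequences leave every compact set, the Urysohn-type function
   dist(.,y)/(dist(.,y) + dist(.,x)) is continuous, equals 1 on the x_n and 0
   on the y_n. Times a nonzero a, it differs by ||a|| on each pair, which no
   element of D_f + C_0 can do. *)
From Pilot Require Import Defs.
From Stdlib Require Import Reals List.
From Stdlib Require Import Lra Lia Psatz Classical ClassicalEpsilon.
Open Scope R_scope.

(** * Elementary algebra in a C*-algebra *)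

Section CStarAlgebra.
Variable A : CStarAlg.
Implicit Types x y z u v : A.

Lemma cadd0l x : cadd c0 x = x.
Proof. rewrite ax_addC. apply ax_add0. Qed.

Lemma caddNl x : cadd (copp x) x = c0.
Proof. rewrite ax_addC. apply ax_addN. Qed.

Lemma copp_unique x y : cadd x y = c0 -> y = copp x.
Proof.
  intro H. rewrite <- (ax_add0 _ y), <- (ax_addN _ x), ax_addA.
  rewrite (ax_addC _ y x), H. apply cadd0l.
Qed.

Lemma cadd_eq_l x y : cadd x y = x -> y = c0.
Proof.
  intro H. transitivity (cadd (cadd (copp x) x) y).
  - rewrite caddNl, cadd0l. reflexivity.
  - rewrite <- ax_addA, H. apply caddNl.
Qed.

Lemma csc0l x : csc (mkCx 0 0) x = c0.
Proof.
  apply (cadd_eq_l (csc (mkCx 0 0) x)).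
  rewrite <- ax_scDl. unfold Cadd; simpl. rewrite Rplus_0_r. reflexivity.
Qed.

Lemma csc0r a : csc a (@c0 A) = c0.
Proof. apply (cadd_eq_l (csc a c0)). rewrite <- ax_scDr, ax_add0. reflexivity. Qed.

Lemma cmul0r x : cmul x c0 = c0.
Proof. apply (cadd_eq_l (cmul x c0)). rewrite <- ax_mulDr, ax_add0. reflexivity. Qed.

Lemma cmul0l x : cmul c0 x = c0.
Proof. apply (cadd_eq_l (cmul c0 x)). rewrite <- ax_mulDl, ax_add0. reflexivity. Qed.

Lemma cstar0 : cstar (@c0 A) = c0.
Proof. apply (cadd_eq_l (cstar c0)). rewrite <- ax_starD, ax_add0. reflexivity. Qed.

Lemma copp_csc b x : copp (csc b x) = csc (mkCx (- cre b) (- cim b)) x.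
Proof.
  symmetry. apply copp_unique. rewrite <- ax_scDl. unfold Cadd; simpl.
  rewrite !Rplus_opp_r. apply csc0l.
Qed.

Lemma csc_opp a x : csc a (copp x) = copp (csc a x).
Proof. apply copp_unique. rewrite <- ax_scDr, ax_addN. apply csc0r. Qed.

Lemma cmul_oppr x y : cmul x (copp y) = copp (cmul x y).
Proof. apply copp_unique. rewrite <- ax_mulDr, ax_addN. apply cmul0r. Qed.

Lemma cmul_oppl x y : cmul (copp x) y = copp (cmul x y).
Proof. apply copp_unique. rewrite <- ax_mulDl, ax_addN. apply cmul0l. Qed.

Lemma cstar_opp x : cstar (copp x) = copp (cstar x).
Proof. apply copp_unique. rewrite <- ax_starD, ax_addN. apply cstar0. Qed.

Lemma copp_add x y : copp (cadd x y) = cadd (copp x) (copp y).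
Proof.
  symmetry. apply copp_unique.
  rewrite <- ax_addA, (ax_addA _ y), (ax_addC _ y (copp x)), <- ax_addA,
    ax_addN, ax_add0, ax_addN.
  reflexivity.
Qed.

Lemma csub_add x y u v : csub (cadd x y) (cadd u v) = cadd (csub x u) (csub y v).
Proof.
  unfold csub. rewrite copp_add, <- !ax_addA. f_equal.
  rewrite !ax_addA. f_equal. apply ax_addC.
Qed.

Lemma csub_chain x y z : cadd (csub x y) (csub y z) = csub x z.
Proof.
  unfold csub. rewrite <- ax_addA. f_equal. rewrite ax_addA, caddNl. apply cadd0l.
Qed.

Lemma csubrr x : csub x x = c0.
Proof. apply ax_addN. Qed.

Lemma csc_sub a x y : csc a (csub x y) = csub (csc a x) (csc a y).
Proof. unfold csub. rewrite ax_scDr, csc_opp. reflexivity. Qed.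

Lemma cstar_sub x y : cstar (csub x y) = csub (cstar x) (cstar y).
Proof. unfold csub. rewrite ax_starD, cstar_opp. reflexivity. Qed.

Lemma cmul_sub x y u v :
  csub (cmul x y) (cmul u v) = cadd (cmul x (csub y v)) (cmul (csub x u) v).
Proof.
  unfold csub. rewrite ax_mulDr, ax_mulDl, cmul_oppr, cmul_oppl.
  symmetry. apply csub_chain.
Qed.

Lemma Cabs_real r : Cabs (mkCx r 0) = Rabs r.
Proof. unfold Cabs; simpl. rewrite <- sqrt_Rsqr_abs. f_equal. unfold Rsqr. ring. Qed.

Lemma Cabs_ge0 a : 0 <= Cabs a.
Proof. apply sqrt_pos. Qed.

Lemma cnorm0 : cnorm (@c0 A) = 0.
Proof. rewrite <- (csc0l c0), ax_normsc, Cabs_real, Rabs_R0. ring. Qed.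

Lemma cnorm_gt0 x : x <> c0 -> cnorm x > 0.
Proof.
  intro Hx. destruct (ax_norm_ge0 _ x) as [H|H]; [exact H|].
  exfalso. apply Hx, ax_norm_eq0. auto.
Qed.

Lemma cnorm_opp x : cnorm (copp x) = cnorm x.
Proof.
  rewrite <- (ax_sc1 _ x) at 1. rewrite copp_csc, ax_normsc. unfold C1; simpl.
  rewrite Ropp_0, Cabs_real, Rabs_Ropp, Rabs_R1. ring.
Qed.

Lemma cnorm_csubC x y : cnorm (csub y x) = cnorm (csub x y).
Proof.
  rewrite <- cnorm_opp. f_equal. symmetry. apply copp_unique.
  rewrite csub_chain. apply csubrr.
Qed.

Lemma cnorm_csub_tri x y z : cnorm (csub x z) <= cnorm (csub x y) + cnorm (csub y z).
Proof. rewrite <- (csub_chain x y z). apply ax_normD. Qed.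

Lemma cnorm_cmul_sub x y u v :
  cnorm (csub (cmul x y) (cmul u v)) <= cnorm x * cnorm (csub y v) + cnorm (csub x u) * cnorm v.
Proof.
  rewrite cmul_sub. eapply Rle_trans; [apply ax_normD|].
  apply Rplus_le_compat; apply ax_normM.
Qed.

(* The C*-identity gives ||x||^2 <= ||x*|| ||x||, and applying it to x* the
   converse. *)
Lemma cnorm_star_ge x : cnorm x <= cnorm (cstar x).
Proof.
  pose proof (ax_cstar _ x). pose proof (ax_normM _ (cstar x) x).
  pose proof (ax_norm_ge0 _ x). pose proof (ax_norm_ge0 _ (cstar x)).
  destruct (Req_dec (cnorm x) 0) as [E|E]; [lra|].
  apply (Rmult_le_reg_r (cnorm x)); lra.
Qed.

Lemma cnorm_star x : cnorm (cstar x) = cnorm x.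
Proof.
  apply Rle_antisym; [|apply cnorm_star_ge].
  rewrite <- (ax_starK _ x) at 2. apply cnorm_star_ge.
Qed.

Lemma cnorm_csc_real_sub (r s : R) x :
  cnorm (csub (csc (mkCx r 0) x) (csc (mkCx s 0) x)) = Rabs (r - s) * cnorm x.
Proof.
  unfold csub. rewrite copp_csc, <- ax_scDl, ax_normsc. unfold Cadd; simpl.
  rewrite Ropp_0, Rplus_0_r, Cabs_real. reflexivity.
Qed.

End CStarAlgebra.

(** * Oscillation control along a filter of pairs *)

Definition pair_filter {X : Type} (F : (X -> X -> Prop) -> Prop) : Prop :=
  F (fun _ _ => True) /\
  (forall P Q, F P -> F Q -> F (fun a b => P a b /\ Q a b)) /\
  (forall P Q : X -> X -> Prop, (forall a b, P a b -> Q a b) -> F P -> F Q).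

Definition controlled {X : Type} {A : CStarAlg} (F : (X -> X -> Prop) -> Prop)
    (g : X -> A) : Prop :=
  forall eps, eps > 0 -> F (fun a b => cnorm (csub (g a) (g b)) < eps).

Definition bounded {X : Type} {A : CStarAlg} (g : X -> A) : Prop :=
  exists M, forall x, cnorm (g x) <= M.

Lemma bounded_nonneg {X : Type} {A : CStarAlg} (g : X -> A) :
  bounded g -> exists M, 0 <= M /\ forall x, cnorm (g x) <= M.
Proof.
  intros [M HM]. exists (Rmax M 0). split; [apply Rmax_r|].
  intro x. eapply Rle_trans; [apply HM|apply Rmax_l].
Qed.

Section Controlled.
Variables (X : Type) (A : CStarAlg) (F : (X -> X -> Prop) -> Prop).
Hypothesis HF : pair_filter F.
Implicit Types g h : X -> A.

Lemma controlled_const (u : A) : controlled F (fun _ => u).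
Proof.
  destruct HF as [T [_ M]]. intros eps He. eapply M; [|exact T].
  intros a b _. rewrite csubrr, cnorm0. lra.
Qed.

Lemma controlled_add g h : controlled F g -> controlled F h -> controlled F (fadd g h).
Proof.
  destruct HF as [_ [I M]]. intros Hg Hh eps He.
  eapply M; [|apply I; [apply (Hg (eps/2))|apply (Hh (eps/2))]; lra].
  intros a b [H1 H2]. unfold fadd. rewrite csub_add.
  eapply Rle_lt_trans; [apply ax_normD|]. lra.
Qed.

Lemma controlled_scale a g : controlled F g -> controlled F (fsc a g).
Proof.
  destruct HF as [_ [_ M]]. intros Hg eps He.
  pose proof (Cabs_ge0 a) as Ha.
  eapply M; [|apply (Hg (eps / (Cabs a + 1))); apply Rdiv_lt_0_compat; lra].
  intros x y Hxy. unfold fsc. rewrite <- csc_sub, ax_normsc.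
  pose proof (ax_norm_ge0 _ (csub (g x) (g y))).
  apply (Rmult_lt_compat_l (Cabs a + 1)) in Hxy; [|lra].
  replace ((Cabs a + 1) * (eps / (Cabs a + 1))) with eps in Hxy by (field; lra). nra.
Qed.

Lemma controlled_star g : controlled F g -> controlled F (fstar g).
Proof.
  destruct HF as [_ [_ M]]. intros Hg eps He. eapply M; [|apply (Hg eps He)].
  intros x y H. unfold fstar. rewrite <- cstar_sub, cnorm_star. exact H.
Qed.

Lemma controlled_mul g h : bounded g -> bounded h ->
  controlled F g -> controlled F h -> controlled F (fmul g h).
Proof.
  destruct HF as [_ [I M]]. intros Bg Bh Hg Hh eps He.
  destruct (bounded_nonneg g Bg) as [Mg [Mg0 Hmg]].
  destruct (bounded_nonneg h Bh) as [Mh [Mh0 Hmh]].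
  set (e := eps / (Mg + Mh + 1)).
  assert (He' : e > 0) by (apply Rdiv_lt_0_compat; lra).
  assert (Hke : (Mg + Mh + 1) * e = eps) by (unfold e; field; lra).
  eapply M; [|apply I; [apply (Hg _ He')|apply (Hh _ He')]].
  intros x y [H1 H2]. unfold fmul.
  eapply Rle_lt_trans; [apply cnorm_cmul_sub|].
  pose proof (Hmg x). pose proof (Hmh y).
  pose proof (ax_norm_ge0 _ (g x)). pose proof (ax_norm_ge0 _ (h y)).
  pose proof (ax_norm_ge0 _ (csub (h x) (h y))).
  pose proof (ax_norm_ge0 _ (csub (g x) (g y))).
  apply Rle_lt_trans with (Mg * e + e * Mh); [|nra].
  apply Rplus_le_compat; apply Rmult_le_compat; lra.
Qed.

Lemma controlled_uniform_limit g :
  (forall eps, eps > 0 -> exists h, controlled F h /\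
     forall x, cnorm (csub (g x) (h x)) <= eps) ->
  controlled F g.
Proof.
  destruct HF as [_ [_ M]]. intros Hap eps He.
  destruct (Hap (eps/3)) as [h [Hh Hd]]; [lra|].
  eapply M; [|apply (Hh (eps/3)); lra].
  intros x y H.
  pose proof (cnorm_csub_tri _ (g x) (h x) (g y)).
  pose proof (cnorm_csub_tri _ (h x) (h y) (g y)).
  pose proof (Hd x). pose proof (Hd y). rewrite cnorm_csubC in H3. lra.
Qed.

End Controlled.

Definition near_pairs {X : Type} (d : X -> X -> R) (x : X) (P : X -> X -> Prop) : Prop :=
  exists delta, delta > 0 /\ forall y, d x y < delta -> P x y.

Definition fine_pairs {X : Type} (d : X -> X -> R) (Y : nat -> X -> Prop) (f : nat -> nat)
    (P : X -> X -> Prop) : Prop :=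
  exists n0, forall n, (n >= n0)%nat ->
    forall x y, Y n x -> Y n y -> d x y < / INR (f n) -> P x y.

Lemma near_pairs_filter {X : Type} d (x : X) : pair_filter (near_pairs d x).
Proof.
  split; [|split].
  - exists 1. split; [lra|]. auto.
  - intros P Q [d1 [H1 P1]] [d2 [H2 Q1]]. exists (Rmin d1 d2). split.
    + apply Rmin_pos; lra.
    + intros y Hy. pose proof (Rmin_l d1 d2). pose proof (Rmin_r d1 d2).
      split; [apply P1|apply Q1]; lra.
  - intros P Q HPQ [d1 [H1 P1]]. exists d1. auto.
Qed.

Lemma fine_pairs_filter {X : Type} d Y f : pair_filter (@fine_pairs X d Y f).
Proof.
  split; [|split].
  - exists 0%nat. auto.
  - intros P Q [n1 P1] [n2 Q1]. exists (max n1 n2). intros n Hn x y Hx Hy Hd.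
    split; [apply (P1 n)|apply (Q1 n)]; auto; lia.
  - intros P Q HPQ [n1 P1]. exists n1. intros. apply HPQ. eauto.
Qed.

Lemma Df_controlled {X : Type} d (A : CStarAlg) Y f (g : X -> A) :
  Df d A Y f g <->
  (forall x, controlled (near_pairs d x) g) /\ bounded g /\ controlled (fine_pairs d Y f) g.
Proof. unfold Df, Cb, continuous_fn, controlled, near_pairs, fine_pairs, bounded. firstorder. Qed.

Section Part1.
Variables (X : Type) (d : X -> X -> R) (A : CStarAlg) (Y : nat -> X -> Prop) (f : nat -> nat).

Lemma Df_const (u : A) : Df d A Y f (fun _ => u).
Proof.
  apply Df_controlled. split; [|split].
  - intro x. apply controlled_const, near_pairs_filter.
  - exists (cnorm u). intro. lra.
  - apply controlled_const, fine_pairs_filter.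
Qed.

Lemma Df_add g h : Df d A Y f g -> Df d A Y f h -> Df d A Y f (fadd g h).
Proof.
  rewrite !Df_controlled. intros [Cg [[Mg Bg] Fg]] [Ch [[Mh Bh] Fh]]. split; [|split].
  - intro x. apply controlled_add; auto using near_pairs_filter.
  - exists (Mg + Mh). intro x. eapply Rle_trans; [apply ax_normD|].
    apply Rplus_le_compat; auto.
  - apply controlled_add; auto using fine_pairs_filter.
Qed.

Lemma Df_scale a g : Df d A Y f g -> Df d A Y f (fsc a g).
Proof.
  rewrite !Df_controlled. intros [Cg [Bg Fg]]. split; [|split].
  - intro x. apply controlled_scale; auto using near_pairs_filter.
  - destruct (bounded_nonneg g Bg) as [M [_ HM]].
    exists (Cabs a * M). intro x. unfold fsc. rewrite ax_normsc.
    apply Rmult_le_compat_l; [apply Cabs_ge0|auto].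
  - apply controlled_scale; auto using fine_pairs_filter.
Qed.

Lemma Df_mul g h : Df d A Y f g -> Df d A Y f h -> Df d A Y f (fmul g h).
Proof.
  rewrite !Df_controlled. intros [Cg [Bg Fg]] [Ch [Bh Fh]]. split; [|split].
  - intro x. apply controlled_mul; auto using near_pairs_filter.
  - destruct (bounded_nonneg g Bg) as [Mg [_ Hg]].
    destruct (bounded_nonneg h Bh) as [Mh [_ Hh]].
    exists (Mg * Mh). intro x. unfold fmul. eapply Rle_trans; [apply ax_normM|].
    apply Rmult_le_compat; auto using ax_norm_ge0.
  - apply controlled_mul; auto using fine_pairs_filter.
Qed.

Lemma Df_star g : Df d A Y f g -> Df d A Y f (fstar g).
Proof.
  rewrite !Df_controlled. intros [Cg [[M Bg] Fg]]. split; [|split].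
  - intro x. apply controlled_star; auto using near_pairs_filter.
  - exists M. intro x. unfold fstar. rewrite cnorm_star. auto.
  - apply controlled_star; auto using fine_pairs_filter.
Qed.

Lemma Df_uniform_limit g : Cb d g ->
  (forall eps, eps > 0 -> exists h, Df d A Y f h /\
     forall x, cnorm (csub (g x) (h x)) <= eps) ->
  Df d A Y f g.
Proof.
  intros Cg Hap. split; [exact Cg|].
  apply (controlled_uniform_limit X A _ (fine_pairs_filter d Y f)).
  intros eps He. destruct (Hap eps He) as [h [Hh Hd]]. exists h.
  split; [apply Df_controlled in Hh; apply Hh|exact Hd].
Qed.

Lemma Df_cstar_subalgebra : cstar_subalgebra d (Df d A Y f).
Proof.
  split; [intros g []; auto|].
  split; [apply Df_const|].
  split; [apply Df_add|]. split; [apply Df_scale|].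
  split; [apply Df_mul|]. split; [apply Df_star|].
  apply Df_uniform_limit.
Qed.

Lemma Df_unital : unital_alg A -> unital_subalgebra (Df d A Y f).
Proof.
  intros [u Hu]. exists (fun _ => u). split; [apply Df_const|].
  intros g _ x. apply Hu.
Qed.

End Part1.

Lemma Df_mono {X : Type} d (A : CStarAlg) Y (f1 f2 : nat -> nat) (g : X -> A) :
  posseq f1 -> le_star f1 f2 -> Df d A Y f1 g -> Df d A Y f2 g.
Proof.
  intros P1 [N HN] [Cg Dg]. split; [exact Cg|].
  intros eps He. destruct (Dg eps He) as [n0 Hn0]. exists (max n0 N).
  intros n Hn x y Hx Hy Hd. apply (Hn0 n); auto; [lia|].
  eapply Rlt_le_trans; [exact Hd|]. apply Rinv_le_contravar.
  - apply lt_0_INR, P1.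
  - apply le_INR, HN. lia.
Qed.

Lemma in_Cf_mono {X : Type} d (A : CStarAlg) Y (f1 f2 : nat -> nat) (g : X -> A) :
  posseq f1 -> le_star f1 f2 -> in_Cf d A Y f1 g -> in_Cf d A Y f2 g.
Proof.
  intros P1 L [h [Dh C0h]]. exists h. split; [|exact C0h].
  apply (Df_mono d A Y f1); auto.
Qed.

Lemma ball_open {X : Type} (d : X -> X -> R) (z : X) (r : R) :
  is_metric d -> Defs.open_set d (fun w => d z w < r).
Proof.
  intros [_ [_ [_ Ht]]] w Hw. exists (r - d z w). split; [lra|].
  intros v Hv. pose proof (Ht z w v). lra.
Qed.

Lemma list_min_pos {I : Type} (F : I -> R) (l : list I) :
  (forall i, F i > 0) -> exists m, m > 0 /\ forall i, In i l -> m <= F i.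
Proof.
  intro HF. induction l as [|a l IH].
  - exists 1. split; [lra|]. intros i [].
  - destruct IH as [m [Hm Hl]]. exists (Rmin m (F a)). split.
    + apply Rmin_pos; [exact Hm|apply HF].
    + intros i [<-|Hi]; [apply Rmin_r|]. eapply Rle_trans; [apply Rmin_l|]. auto.
Qed.

(* Lebesgue-number argument: cover K by the balls B(x, delta_x/2) on which the
   oscillation is < eps/2, and take half the least radius of a finite subcover. *)
Lemma compact_uniform_continuity {X : Type} {A : CStarAlg} (d : X -> X -> R)
    (K : X -> Prop) (g : X -> A) :
  is_metric d -> compact_set d K -> continuous_fn d g ->
  forall eps, eps > 0 -> exists delta, delta > 0 /\
    forall x y, K x -> K y -> d x y < delta -> cnorm (csub (g x) (g y)) < eps.
Proof.
  intros Hm HK Hg eps He.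
  pose (I := {p : X * R | snd p > 0 /\ forall w, d (fst p) w < snd p ->
                 cnorm (csub (g (fst p)) (g w)) < eps / 2}).
  destruct (HK I (fun i w => d (fst (proj1_sig i)) w < snd (proj1_sig i) / 2)) as [l Hl].
  - intro i. apply ball_open, Hm.
  - intros x Kx. destruct (Hg x (eps/2)) as [dl [Hdl Hc]]; [lra|].
    exists (exist _ (x, dl) (conj Hdl Hc)); simpl.
    destruct Hm as [_ [H0 _]]. rewrite (proj2 (H0 x x) eq_refl). lra.
  - destruct (list_min_pos (fun i : I => snd (proj1_sig i) / 2) l) as [m [Hm0 Hml]].
    { intros [[z r] [Hr Hc]]. simpl in *. lra. }
    exists m. split; [exact Hm0|]. intros x y Kx Ky Hxy.
    destruct (Hl x Kx) as [[[z r] [Hr Hc]] [Hin Hu]]. simpl in Hu, Hc.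
    pose proof (Hml _ Hin) as Hmr; simpl in Hmr.
    destruct Hm as [_ [_ [_ Ht]]]. pose proof (Ht z x y).
    pose proof (Hc x ltac:(lra)). pose proof (Hc y ltac:(lra)).
    pose proof (cnorm_csub_tri _ (g x) (g z) (g y)).
    pose proof (cnorm_csubC _ (g z) (g x)). lra.
Qed.

Lemma Cb_in_some_Df {X : Type} (d : X -> X -> R) (A : CStarAlg) (Y : nat -> X -> Prop)
    (g : X -> A) :
  is_metric d -> (forall n, compact_set d (Y n)) -> Cb d g ->
  exists f, posseq f /\ Df d A Y f g.
Proof.
  intros Hm HY Cg.
  assert (Hk : forall n, exists k : nat, (0 < k)%nat /\ forall x y, Y n x -> Y n y ->
            d x y < / INR k -> cnorm (csub (g x) (g y)) < / INR (S n)).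
  { intro n.
    destruct (compact_uniform_continuity d (Y n) g Hm (HY n) (proj1 Cg) (/ INR (S n)))
      as [dl [Hdl Hu]].
    { apply Rinv_0_lt_compat, lt_0_INR. lia. }
    destruct (archimed_cor1 dl Hdl) as [k [Hk1 Hk2]]. exists k. split; [exact Hk2|].
    intros x y Hx Hy Hd. apply Hu; auto. lra. }
  destruct (choice _ Hk) as [f Hf].
  exists f. split; [intro n; apply Hf|]. split; [exact Cg|].
  intros eps He. destruct (archimed_cor1 eps He) as [N [HN1 HN2]].
  exists N. intros n Hn x y Hx Hy Hd.
  eapply Rlt_trans; [apply (proj2 (Hf n) x y Hx Hy Hd)|].
  eapply Rle_lt_trans; [|exact HN1]. apply Rinv_le_contravar.
  - apply lt_0_INR. exact HN2.
  - apply le_INR. lia.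
Qed.

Lemma close_pair {X : Type} (d : X -> X -> R) (K : X -> Prop) delta :
  is_metric d -> compact_set d K -> infinite_set K -> delta > 0 ->
  exists x y, K x /\ K y /\ x <> y /\ d x y < delta.
Proof.
  intros Hm HK Hinf Hdl. apply NNPP. intro Hno.
  assert (Hun : forall x y, K x -> K y -> d x y < delta -> x = y).
  { intros x y Kx Ky Hd. apply NNPP. intro Hne. apply Hno. exists x, y. auto. }
  destruct (HK X (fun z w => d z w < delta / 2)) as [l Hl].
  - intro i. apply ball_open, Hm.
  - intros x _. exists x. destruct Hm as [_ [H0 _]].
    rewrite (proj2 (H0 x x) eq_refl). lra.
  - (* each ball of radius delta/2 meets K in at most one point *)
    assert (Hlist : forall l : list X, exists l', forall x, K x ->
              (exists i, In i l /\ d i x < delta / 2) -> In x l').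
    { induction l0 as [|a l0 IH].
      - exists nil. intros x _ [i [[] _]].
      - destruct IH as [l' Hl'].
        destruct (classic (exists w, K w /\ d a w < delta / 2)) as [[w [Kw Hw]]|Hnw].
        + exists (w :: l'). intros x Kx [i [[<-|Hi] Hix]].
          * left. apply Hun; auto. destruct Hm as [_ [_ [Hs Ht]]].
            pose proof (Ht w a x). rewrite Hs in Hw. lra.
          * right. apply Hl'; eauto.
        + exists l'. intros x Kx [i [[<-|Hi] Hix]].
          * exfalso. apply Hnw. eauto.
          * apply Hl'; eauto. }
    destruct (Hlist l) as [l' Hl']. apply Hinf. exists l'. auto.
Qed.

Definition leaves_compacts {X : Type} (d : X -> X -> R) (z : nat -> X) : Prop :=
  forall K, compact_set d K -> exists N, forall n, (n >= N)%nat -> ~ K (z n).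

(* The distance from p to the range of z, as an infimum; the absolute value
   only makes the set bounded without assuming that d is a metric. *)
Definition dist_seq_set {X : Type} (d : X -> X -> R) (z : nat -> X) (p : X) : R -> Prop :=
  fun r => exists n, r = - Rabs (d p (z n)).

Lemma dist_seq_set_bound {X : Type} d z (p : X) : bound (dist_seq_set d z p).
Proof. exists 0. intros r [n ->]. pose proof (Rabs_pos (d p (z n))). lra. Qed.

Lemma dist_seq_set_inhabited {X : Type} d z (p : X) : exists r, dist_seq_set d z p r.
Proof. exists (- Rabs (d p (z 0%nat))), 0%nat. reflexivity. Qed.

Definition dist_seq {X : Type} (d : X -> X -> R) (z : nat -> X) (p : X) : R :=
  - proj1_sig (completeness _ (dist_seq_set_bound d z p) (dist_seq_set_inhabited d z p)).

Section DistSeq.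
Variables (X : Type) (d : X -> X -> R) (z : nat -> X).
Hypothesis Hm : is_metric d.

Lemma dist_seq_le p n : dist_seq d z p <= d p (z n).
Proof.
  unfold dist_seq. destruct (completeness _ _ _) as [m Hlub]. simpl.
  pose proof (proj1 Hlub _ (ex_intro _ n eq_refl)).
  destruct Hm as [H0 _]. rewrite Rabs_right in H by (apply Rle_ge, H0). lra.
Qed.

Lemma dist_seq_ge p c : (forall n, c <= d p (z n)) -> c <= dist_seq d z p.
Proof.
  intro H. unfold dist_seq. destruct (completeness _ _ _) as [m Hlub]. simpl.
  assert (m <= - c); [|lra].
  apply (proj2 Hlub). intros r [n ->]. destruct Hm as [H0 _].
  rewrite Rabs_right by (apply Rle_ge, H0). pose proof (H n). lra.
Qed.

Lemma dist_seq_ge0 p : 0 <= dist_seq d z p.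
Proof. apply dist_seq_ge. intro n. apply Hm. Qed.

Lemma dist_seq_at n : dist_seq d z (z n) = 0.
Proof.
  apply Rle_antisym; [|apply dist_seq_ge0].
  pose proof (dist_seq_le (z n) n). destruct Hm as [_ [H0 _]].
  rewrite (proj2 (H0 (z n) (z n)) eq_refl) in H. exact H.
Qed.

Lemma dist_seq_lipschitz p q : Rabs (dist_seq d z p - dist_seq d z q) <= d p q.
Proof.
  destruct Hm as [_ [_ [Hs Ht]]].
  assert (L : forall p q, dist_seq d z p <= d p q + dist_seq d z q).
  { intros p' q'. assert (dist_seq d z p' - d p' q' <= dist_seq d z q'); [|lra].
    apply dist_seq_ge. intro n. pose proof (dist_seq_le p' n). pose proof (Ht p' q' (z n)).
    lra. }
  pose proof (L p q). pose proof (L q p). rewrite Hs in H0. apply Rabs_le. lra.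
Qed.

Lemma finite_min_dist p N :
  (forall n, d p (z n) > 0) -> exists c, c > 0 /\ forall n, (n < N)%nat -> c <= d p (z n).
Proof.
  intro H. induction N as [|N IH].
  - exists 1. split; [lra|]. intros; lia.
  - destruct IH as [c [Hc Hl]]. exists (Rmin c (d p (z N))). split.
    + apply Rmin_pos; [exact Hc|apply H].
    + intros n Hn. destruct (Nat.eq_dec n N) as [->|Hne]; [apply Rmin_r|].
      eapply Rle_trans; [apply Rmin_l|]. apply Hl. lia.
Qed.

(* Local compactness puts a compact ball around p; only finitely many z n
   enter it, and these are at positive distance from p. *)
Lemma dist_seq_pos p : locally_compact d -> leaves_compacts d z ->
  (forall n, p <> z n) -> dist_seq d z p > 0.
Proof.
  intros Hlc Hz Hp.
  destruct (Hlc p) as [K [eps [HK [He HB]]]].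
  destruct (Hz K HK) as [N HN].
  destruct (finite_min_dist p N) as [c [Hc Hl]].
  { intro n. destruct Hm as [H0 [Heq _]]. destruct (H0 p (z n)) as [?|E]; auto.
    exfalso. apply (Hp n), Heq. auto. }
  apply Rlt_le_trans with (Rmin c eps); [apply Rmin_pos; lra|].
  apply dist_seq_ge. intro n.
  destruct (Compare_dec.le_lt_dec N n) as [Hn|Hn].
  - destruct (Rlt_le_dec (d p (z n)) eps) as [Hlt|Hge].
    + exfalso. apply (HN n Hn), HB, Hlt.
    + eapply Rle_trans; [apply Rmin_r|]. auto.
  - eapply Rle_trans; [apply Rmin_l|]. auto.
Qed.

End DistSeq.

Lemma ratio_continuity a b a' b' t eps :
  0 <= a -> 0 <= b -> 0 <= a' -> 0 <= b' -> 0 < a + b -> eps > 0 ->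
  Rabs (a - a') <= t -> Rabs (b - b') <= t -> t < (a + b) / 4 -> t < eps * (a + b) / 4 ->
  Rabs (a / (a + b) - a' / (a' + b')) < eps.
Proof.
  intros Ha Hb Ha' Hb' Hs He H1 H2 H3 H4.
  pose proof (Rle_abs (a - a')). pose proof (Rle_abs (- (a - a'))).
  pose proof (Rle_abs (b - b')). pose proof (Rle_abs (- (b - b'))).
  rewrite Rabs_Ropp in *.
  assert (Hs' : a' + b' >= (a + b) / 2) by lra.
  replace (a / (a + b) - a' / (a' + b'))
    with ((a * (b' - b) - b * (a' - a)) / ((a + b) * (a' + b'))) by (field; lra).
  assert (Hn : Rabs (a * (b' - b) - b * (a' - a)) <= (a + b) * t)
    by (apply Rabs_le; split; nra).
  unfold Rdiv. rewrite Rabs_mult, Rabs_inv, (Rabs_right ((a + b) * (a' + b'))) by nra.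
  apply Rle_lt_trans with ((a + b) * t * / ((a + b) * (a' + b'))).
  { apply Rmult_le_compat_r; [left; apply Rinv_0_lt_compat; nra|exact Hn]. }
  replace ((a + b) * t * / ((a + b) * (a' + b'))) with (t / (a' + b')) by (field; lra).
  apply (Rmult_lt_reg_r (a' + b')); [lra|].
  unfold Rdiv. rewrite Rmult_assoc, Rinv_l, Rmult_1_r by lra. nra.
Qed.

Definition continuous_real {X : Type} (d : X -> X -> R) (psi : X -> R) : Prop :=
  forall p eps, eps > 0 -> exists delta, delta > 0 /\
    forall q, d p q < delta -> Rabs (psi p - psi q) < eps.

Lemma separating_function {X : Type} (d : X -> X -> R) (xs ys : nat -> X) :
  is_metric d -> locally_compact d -> leaves_compacts d xs -> leaves_compacts d ys ->
  (forall n m, xs n <> ys m) ->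
  exists psi : X -> R, continuous_real d psi /\ (forall p, Rabs (psi p) <= 1) /\
    (forall n, psi (xs n) = 1) /\ (forall n, psi (ys n) = 0).
Proof.
  intros Hm Hlc Hx Hy Hneq.
  set (dY := dist_seq d ys). set (dX := dist_seq d xs).
  assert (HdY := dist_seq_ge0 X d ys Hm). assert (HdX := dist_seq_ge0 X d xs Hm).
  fold dY dX in HdY, HdX.
  assert (Hs : forall p, dY p + dX p > 0).
  { intro p. pose proof (HdY p). pose proof (HdX p).
    destruct (classic (exists n, p = ys n)) as [[n ->]|Hn].
    - assert (dX (ys n) > 0); [|lra].
      apply dist_seq_pos; auto.
    - assert (dY p > 0); [|lra].
      apply dist_seq_pos; auto. intros m E. apply Hn. eauto. }
  exists (fun p => dY p / (dY p + dX p)). split; [|split; [|split]].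
  - intros p eps He. pose proof (Hs p).
    exists (Rmin ((dY p + dX p) / 4) (eps * (dY p + dX p) / 4)). split.
    { apply Rmin_pos; [lra|]. pose proof (Rmult_lt_0_compat eps _ He H). lra. }
    intros q Hq. apply ratio_continuity with (t := d p q); auto.
    + apply dist_seq_lipschitz, Hm.
    + apply dist_seq_lipschitz, Hm.
    + eapply Rlt_le_trans; [exact Hq|apply Rmin_l].
    + eapply Rlt_le_trans; [exact Hq|apply Rmin_r].
  - intro p. pose proof (Hs p). pose proof (HdY p). pose proof (HdX p).
    assert (Hinv : 0 < / (dY p + dX p)) by (apply Rinv_0_lt_compat; lra).
    unfold Rdiv. rewrite Rabs_right by (apply Rle_ge, Rmult_le_pos; lra).
    apply (Rmult_le_reg_r (dY p + dX p)); [lra|].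
    rewrite Rmult_assoc, Rinv_l by lra. lra.
  - intro n. unfold dX. rewrite dist_seq_at by exact Hm.
    assert (dY (xs n) > 0) by (apply dist_seq_pos; auto).
    field. lra.
  - intro n. unfold dY. rewrite dist_seq_at by exact Hm. unfold Rdiv. ring.
Qed.

Lemma Cb_scale_real {X : Type} (d : X -> X -> R) {A : CStarAlg} (psi : X -> R) (a : A) :
  continuous_real d psi -> (forall p, Rabs (psi p) <= 1) ->
  Cb d (fun p => csc (mkCx (psi p) 0) a).
Proof.
  intros Hpsi H1. pose proof (ax_norm_ge0 _ a). split.
  - intros p eps He. destruct (Hpsi p (eps / (cnorm a + 1))) as [dl [Hdl Hq]].
    { apply Rdiv_lt_0_compat; lra. }
    exists dl. split; [exact Hdl|]. intros q Hpq. rewrite cnorm_csc_real_sub.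
    pose proof (Hq q Hpq) as Hlt. pose proof (Rabs_pos (psi p - psi q)).
    apply (Rmult_lt_compat_r (cnorm a + 1)) in Hlt; [|lra].
    replace (eps / (cnorm a + 1) * (cnorm a + 1)) with eps in Hlt by (field; lra). nra.
  - exists (cnorm a). intro p. rewrite ax_normsc, Cabs_real.
    pose proof (H1 p). nra.
Qed.

(* Far out, an element h + k of D_f + C_0 has k small at both points of a
   pair, and h varies little across it. *)
Lemma not_in_Cf_of_separated_pairs {X : Type} (d : X -> X -> R) (A : CStarAlg)
    (Y : nat -> X -> Prop) (f : nat -> nat) (g : X -> A) (xs ys : nat -> X) (c : R) :
  (forall K, compact_set d K -> exists N, forall n, (n >= N)%nat -> ~ exists x, K x /\ Y n x) ->
  (forall n, Y n (xs n) /\ Y n (ys n) /\ d (xs n) (ys n) < / INR (f n)) ->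
  c > 0 -> (forall n, c <= cnorm (csub (g (xs n)) (g (ys n)))) ->
  ~ in_Cf d A Y f g.
Proof.
  intros HYloc Hxy Hc Hsep [h [[_ Dh] [_ C0h]]].
  destruct (C0h (c / 3)) as [K [HK HKo]]; [lra|].
  destruct (HYloc K HK) as [N HN].
  destruct (Dh (c / 3)) as [n0 Hn0]; [lra|].
  set (n := max N n0).
  destruct (Hxy n) as [Hxn [Hyn Hdn]].
  assert (Kx : ~ K (xs n)) by (intro Kx; apply (HN n); [lia|]; eauto).
  assert (Ky : ~ K (ys n)) by (intro Ky; apply (HN n); [lia|]; eauto).
  pose proof (HKo _ Kx) as T1. pose proof (HKo _ Ky) as T2. unfold fsub in T1, T2.
  pose proof (Hn0 n ltac:(lia) _ _ Hxn Hyn Hdn) as T3.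
  pose proof (Hsep n) as T4.
  pose proof (cnorm_csub_tri _ (g (xs n)) (h (xs n)) (g (ys n))).
  pose proof (cnorm_csub_tri _ (h (xs n)) (h (ys n)) (g (ys n))).
  pose proof (cnorm_csubC _ (g (ys n)) (h (ys n))). lra.
Qed.

Lemma Cf_proper {X : Type} (d : X -> X -> R) (A : CStarAlg) (Y : nat -> X -> Prop)
    (f : nat -> nat) :
  is_metric d -> locally_compact d -> nonzero_alg A ->
  (forall n, infinite_set (Y n)) -> (forall n, compact_set d (Y n)) ->
  (forall n m x, n <> m -> Y n x -> Y m x -> False) ->
  (forall K, compact_set d K -> exists N, forall n, (n >= N)%nat -> ~ exists x, K x /\ Y n x) ->
  posseq f -> exists g : X -> A, Cb d g /\ ~ in_Cf d A Y f g.
Proof.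
  intros Hm Hlc [a Ha] HYinf HYcpt HYdisj HYloc Hf.
  assert (Hpairs : forall n, exists p : X * X, Y n (fst p) /\ Y n (snd p) /\
            fst p <> snd p /\ d (fst p) (snd p) < / INR (f n)).
  { intro n. destruct (close_pair d (Y n) (/ INR (f n)) Hm (HYcpt n) (HYinf n))
      as [x [y Hxy]]; [apply Rinv_0_lt_compat, lt_0_INR, Hf|].
    exists (x, y). exact Hxy. }
  destruct (choice _ Hpairs) as [pr Hpr].
  set (xs := fun n => fst (pr n)). set (ys := fun n => snd (pr n)).
  assert (Hleave : forall z : nat -> X, (forall n, Y n (z n)) -> leaves_compacts d z).
  { intros z Hz K HK. destruct (HYloc K HK) as [N HN]. exists N.
    intros n Hn Kz. apply (HN n Hn). eauto. }
  assert (Hneq : forall n m, xs n <> ys m).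
  { intros n m E. destruct (Nat.eq_dec n m) as [<-|Hne].
    - apply (Hpr n), E.
    - apply (HYdisj n m (xs n) Hne); [apply Hpr|rewrite E; apply Hpr]. }
  destruct (separating_function d xs ys Hm Hlc) as [psi [Hc [H1 [Hx Hy]]]]; auto.
  { apply Hleave. intro n. apply Hpr. }
  { apply Hleave. intro n. apply Hpr. }
  exists (fun p => csc (mkCx (psi p) 0) a). split; [apply Cb_scale_real; auto|].
  apply (not_in_Cf_of_separated_pairs d A Y f _ xs ys (cnorm a)); auto.
  - intro n. split; [|split]; apply Hpr.
  - apply cnorm_gt0, Ha.
  - intro n. rewrite cnorm_csc_real_sub, Hx, Hy, Rminus_0_r, Rabs_R1. lra.
Qed.

Theorem proposition2p3
  (X : Type) (d : X -> X -> R) (A : CStarAlg) (Y : nat -> X -> Prop)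
  (Hd : is_metric d) (Hlc : locally_compact d) (Hnc : ~ compact_set d (fun _ => True))
  (Hpol : polish d) (HA : nonzero_alg A)
  (HYinf : forall n, infinite_set (Y n))
  (HYcpt : forall n, compact_set d (Y n))
  (HYdisj : forall n m x, n <> m -> Y n x -> Y m x -> False)
  (HYloc : forall K, compact_set d K ->
     exists N, forall n, (n >= N)%nat -> ~ exists x, K x /\ Y n x) :
  (* (1) *)
  (forall f, posseq f ->
     cstar_subalgebra d (Df d A Y f) /\
     (unital_alg A -> unital_subalgebra (Df d A Y f))) /\
  (* (2) *)
  (forall f1 f2, posseq f1 -> posseq f2 -> le_star f1 f2 ->
     forall g, Cb d g -> in_Cf d A Y f1 g -> in_Cf d A Y f2 g) /\
  (* (3) *)
  (forall g : X -> A, Cb d g <-> exists f, posseq f /\ Df d A Y f g) /\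
  (* (4) *)
  (forall f, posseq f -> exists g : X -> A, Cb d g /\ ~ in_Cf d A Y f g).
Proof.
  split; [|split; [|split]].
  - intros f _. split; [apply Df_cstar_subalgebra|apply Df_unital].
  - intros f1 f2 P1 _ L g _. apply in_Cf_mono; auto.
  - intro g. split; [apply Cb_in_some_Df; auto|].
    intros [f [_ [Cg _]]]. exact Cg.
  - intros f Hf. apply Cf_proper; auto.
Qed.
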